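(* Assume $S\times M\neq\emptyset$, let $(x,\lambda):[t_0,+\infty[\ \to X\times Y$ be a solution of (AHT), and suppose there exists $t_+\ge t_0$ such that $\varepsilon^2(t)+\dot\varepsilon(t)\ge0$ and $2\varepsilon(t)\dot\varepsilon(t)+\ddot\varepsilon(t)\le0$ for all $t\ge t_+$. Then \[ \|(\dot x(t),\dot\lambda(t))\|^2=\mathcal{O}\big(e^{-2\rho(t)}+\varepsilon^2(t)\big)\quad\text{as } t\to+\infty. \]
   Context: $X,Y$ are real Hilbert spaces; $X\times Y$ carries the product inner product and norm $\|\cdot\|$. Standing assumptions: $f:X\to\mathbb{R}$ is convex and continuously differentiable with $\nabla f$ Lipschitz continuous on bounded subsets of $X$; $A:X\to Y$ is linear and continuous with adjoint $A^*$; $b\in Y$; $\varepsilon:[t_0,+\infty[\ \to\ ]0,+\infty[$ ($t_0\ge0$) is twice continuously differentiable with $\lim_{t\to+\infty}\varepsilon(t)=0$. $L(x,\lambda)=f(x)+\langle\lambda,Ax-b\rangle_Y$. $S$ is the set of optimal solutions of $\min\{f(x):Ax=b\}$, $M$ the set of Lagrange multipliers; $S\times M$ is the set of saddle points of $L$. $\rho(t)=\int_{t_0}^t\varepsilon(\tau)\,d\tau$. (AHT) is the system $\dot x+\nabla f(x)+A^*\lambda+\varepsilon(t)x=0$, $\dot\lambda+b-Ax+\varepsilon(t)\lambda=0$; a solution is a continuously differentiable $(x,\lambda):[t_0,+\infty[\ \to X\times Y$ satisfying it on $[t_0,+\infty[$ (existence and uniqueness for every initial datum is assumed). *)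

From HB Require Import structures.
From mathcomp Require Import all_boot all_order all_algebra.
From mathcomp Require Import all_classical all_reals all_analysis.
Set Implicit Arguments. Unset Strict Implicit. Unset Printing Implicit Defensive.
Import Order.TTheory GRing.Theory Num.Theory.
Import numFieldNormedType.Exports.
Local Open Scope classical_set_scope.
Local Open Scope ring_scope.

(* A real Hilbert space is modelled as a complete normed space X over R
   together with an inner product ip : X -> X -> R inducing its norm. *)
Definition is_inner_product {R : realType} (X : normedModType R)
  (ip : X -> X -> R) : Prop :=
  [/\ forall x y, ip x y = ip y x,
      forall (a : R) (x y z : X), ip (a *: x + y) z = a * ip x z + ip y z
    & forall x, ip x x = `|x| ^+ 2].

Definition convex_fun {R : realType} (X : normedModType R) (f : X -> R) : Prop :=
  forall (x y : X) (s : R), 0 <= s <= 1 ->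
    f (s *: x + (1 - s) *: y) <= s * f x + (1 - s) * f y.

Definition is_gradient {R : realType} (X : normedModType R)
  (ip : X -> X -> R) (f : X -> R) (g : X -> X) : Prop :=
  forall x : X, differentiable f x /\ (forall h : X, 'd f x h = ip (g x) h).

Definition lipschitz_on_bounded {R : realType} (X : normedModType R)
  (g : X -> X) : Prop :=
  forall r : R, exists L : R, forall x y : X,
    `|x| <= r -> `|y| <= r -> `|g x - g y| <= L * `|x - y|.

Definition lagrangian {R : realType} (X Y : normedModType R)
  (ipY : Y -> Y -> R) (f : X -> R) (A : X -> Y) (b : Y) (x : X) (lam : Y) : R :=
  f x + ipY lam (A x - b).

(* (xs, ls) is a saddle point of L, i.e. an element of S x M *)
Definition saddle_point {R : realType} (X Y : normedModType R)
  (ipY : Y -> Y -> R) (f : X -> R) (A : X -> Y) (b : Y) (xs : X) (ls : Y) : Prop :=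
  forall (x : X) (mu : Y),
    lagrangian ipY f A b xs mu <= lagrangian ipY f A b xs ls /\
    lagrangian ipY f A b xs ls <= lagrangian ipY f A b x ls.

Definition rho {R : realType} (eps : R -> R) (t0 t : R) : R :=
  \int[lebesgue_measure]_(s in `[t0, t]) eps s.

(* The filter t --> +oo on R, packed as a filter_on so that it can be used
   with the Landau notation f =O_F g. *)
Definition pinfty_filter (R : realType) : filter_on R :=
  FilterType (pinfty_nbhs R) (@proper_pinfty_nbhs R).

(* Write z = (x, lam) and V(z, e) = (aht_x, aht_lam), so that (AHT) reads
   z' = V(z, eps).  Monotonicity of gradf and skew-adjointness of the coupling
   give, for all states and parameters,
     <V(z1, e1) - V(z0, e0), z1 - z0>
       <= - (e0 + e1)/2 |z1 - z0|^2 - (e1 - e0)/2 (|z1|^2 - |z0|^2).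
   Comparing z with a saddle point, Gronwall's lemma with weight exp(rho)
   shows that z is bounded.  Since z need not be twice differentiable, the
   velocity is replaced by difference quotients: comparing z(t + h) with z(t),
     E_h(t) = |(z(t+h) - z(t))/h|^2 + (eps(t+h) - eps(t))/h * (P(t+h) - P(t))/h
   with P = int_t0 |z|^2 satisfies E_h' <= - (eps(t) + eps(t+h)) E_h, because
   eps^2 + eps' is nonincreasing and P is nondecreasing.  Hence
   E_h(t) exp(rho(t) + rho(t+h)) is nonincreasing; letting h -> 0 gives
   |z'|^2 + eps' |z|^2 = O(exp(-2 rho)), and eps' >= - eps^2 together with the
   boundedness of z yields the estimate. *)

From HB Require Import structures.
From mathcomp Require Import all_boot all_order all_algebra.
From mathcomp Require Import all_classical all_reals all_analysis.
From mathcomp Require Import ring lra.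
Import Order.TTheory GRing.Theory Num.Theory.
Import numFieldNormedType.Exports.
Local Open Scope classical_set_scope.
Local Open Scope ring_scope.
Set Implicit Arguments. Unset Strict Implicit. Unset Printing Implicit Defensive.

Section InnerProduct.
Variables (R : realType) (V : normedModType R) (ip : V -> V -> R).
Hypothesis ip_inner : is_inner_product ip.

Lemma ipC x y : ip x y = ip y x. Proof. by case: ip_inner. Qed.
Lemma ipxx x : ip x x = `|x| ^+ 2. Proof. by case: ip_inner. Qed.

Lemma ipDZl a x y z : ip (a *: x + y) z = a * ip x z + ip y z.
Proof. by case: ip_inner. Qed.

Lemma ip0l z : ip 0 z = 0.
Proof. by have := ipDZl 1 0 0 z; rewrite scaler0 add0r mul1r; lra. Qed.

Lemma ipDl x y z : ip (x + y) z = ip x z + ip y z.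
Proof. by rewrite -[x in LHS]scale1r ipDZl mul1r. Qed.

Lemma ipZl a x z : ip (a *: x) z = a * ip x z.
Proof. by rewrite -[_ *: x]addr0 ipDZl ip0l addr0. Qed.

Lemma ipNl x z : ip (- x) z = - ip x z.
Proof. by rewrite -scaleN1r ipZl mulN1r. Qed.

Lemma ipBl x y z : ip (x - y) z = ip x z - ip y z.
Proof. by rewrite ipDl ipNl. Qed.

Lemma ip0r z : ip z 0 = 0. Proof. by rewrite ipC ip0l. Qed.

Lemma ipDr x y z : ip z (x + y) = ip z x + ip z y.
Proof. by rewrite ipC ipDl !(ipC z). Qed.

Lemma ipZr a x z : ip z (a *: x) = a * ip z x.
Proof. by rewrite ipC ipZl ipC. Qed.

Lemma ipNr x z : ip z (- x) = - ip z x.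
Proof. by rewrite ipC ipNl ipC. Qed.

Lemma ipBr x y z : ip z (x - y) = ip z x - ip z y.
Proof. by rewrite ipDr ipNr. Qed.

Lemma ipxx_ge0 x : 0 <= ip x x. Proof. by rewrite ipxx sqr_ge0. Qed.

Lemma ipxx_le_sub a b : ip a a <= 2 * ip (a - b) (a - b) + 2 * ip b b.
Proof.
have := ipxx_ge0 (a - 2 *: b).
by rewrite !(ipBl, ipBr, ipZl, ipZr) (ipC b a); lra.
Qed.

Lemma ip_polar a b : ip a b = (`|a + b| ^+ 2 - `|a| ^+ 2 - `|b| ^+ 2) / 2.
Proof. by rewrite -!ipxx ipDl !ipDr (ipC b a); field. Qed.

Lemma cvg_ip (T : Type) (F : set_system T) (FF : Filter F) (g k : T -> V) a b :
  g s @[s --> F] --> a -> k s @[s --> F] --> b ->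
  ip (g s) (k s) @[s --> F] --> ip a b.
Proof.
move=> ga kb; under eq_fun do rewrite ip_polar !expr2; rewrite ip_polar !expr2.
apply: cvgM; last exact: cvg_cst.
by apply: cvgB; [apply: cvgB|]; apply: cvgM; apply: cvg_norm => //; apply: cvgD.
Qed.

End InnerProduct.

Section DifferenceQuotient.
Variables (R : realType) (W : normedModType R).
Implicit Types (g : R -> W) (t h : R) (d : W).

Definition diffq g (h t : R) : W := h^-1 *: (g (t + h) - g t).

Lemma diffq_shiftE g t :
  (fun h : R => h^-1 *: ((g \o shift t) (h *: 1) - g t)) = diffq g ^~ t.
Proof. by rewrite funeqE => h; rewrite /diffq /= [h%:A]mulr1 (addrC h). Qed.

Lemma is_derive_diffqP g t d :
  is_derive t 1 g d <-> diffq g h t @[h --> 0^'] --> d.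
Proof.
split=> [gd | gd].
  rewrite -(diffq_shiftE g t) -(derive_val (is_derive := gd)).
  exact: (ex_derive (is_derive := gd)).
apply: DeriveDef; first by rewrite /derivable (diffq_shiftE g t); apply/cvg_ex; exists d.
by rewrite /derive (diffq_shiftE g t); exact: cvg_lim gd.
Qed.

Lemma derivable_is_derive1 g t : derivable g t 1 -> is_derive t 1 g (derive1 g t).
Proof. by rewrite derive1E; exact: derivableP. Qed.

Lemma is_derive_continuous g t d : is_derive t 1 g d -> {for t, continuous g}.
Proof.
by move=> gd; apply/differentiable_continuous/derivable1_diffP; exact: ex_derive.
Qed.

Lemma is_derive_cvg_translate g t d :
  is_derive t 1 g d -> g (t + h) @[h --> 0^'] --> g t.
Proof.
move=> /is_derive_continuous gc.
have tc : (t + h) @[h --> 0^'] --> t.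
  apply: cvg_within_filter; rewrite -{2}[t]addr0.
  by apply: cvgD; [exact: cvg_cst | exact: cvg_id].
exact: (cvg_comp _ _ tc gc).
Qed.

Lemma is_derive_translate g t h d :
  is_derive (t + h) 1 g d -> is_derive t 1 (fun s => g (s + h)) d.
Proof.
move=> /is_derive_diffqP gd; apply/is_derive_diffqP.
by under eq_fun do rewrite /diffq addrAC.
Qed.

Lemma is_derive_diffq g dg t h :
  is_derive (t + h) 1 g (dg (t + h)) -> is_derive t 1 g (dg t) ->
  is_derive t 1 (diffq g h) (diffq dg h t).
Proof.
move=> g1 g0; apply: is_deriveZ; apply: is_deriveB => //.
exact: is_derive_translate.
Qed.

End DifferenceQuotient.

Section InnerProductDerive.
Variables (R : realType) (V : normedModType R) (ip : V -> V -> R).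
Hypothesis ip_inner : is_inner_product ip.

Lemma is_derive_ip (g k : R -> V) (t : R) (dg dk : V) :
  is_derive t 1 g dg -> is_derive t 1 k dk ->
  is_derive t 1 (fun s => ip (g s) (k s)) (ip dg (k t) + ip (g t) dk).
Proof.
move=> gd kd; apply/is_derive_diffqP.
have -> : (fun h => diffq (fun s => ip (g s) (k s)) h t) =
    (fun h => ip (diffq g h t) (k (t + h)) + ip (g t) (diffq k h t)).
  apply/funext => h; rewrite /diffq (ipZl ip_inner) (ipZr ip_inner).
  by rewrite (ipBl ip_inner) (ipBr ip_inner) -mulrDr; congr (_ * _); ring.
apply: cvgD; apply: (cvg_ip ip_inner).
- exact: (is_derive_diffqP g t dg).1.
- exact: is_derive_cvg_translate kd.
- exact: cvg_cst.
- exact: (is_derive_diffqP k t dk).1.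
Qed.

End InnerProductDerive.

Section RealCalculus.
Variable R : realType.
Implicit Types (phi dphi c dc : R -> R) (a t : R).

Lemma is_derive_integral phi a t : a < t ->
  (forall s, a <= s -> {for s, continuous phi}) ->
  is_derive t 1 (fun s => \int[lebesgue_measure]_(u in `[a, s]) phi u) (phi t).
Proof.
move=> a_lt_t phic.
have phi_int : lebesgue_measure.-integrable `[a, t + 1] (EFin \o phi).
  apply: continuous_compact_integrable; first exact: segment_compact.
  apply: continuous_in_subspaceT => s; rewrite inE /= in_itv /= => /andP[a_le_s _].
  exact: phic.
have t1 : t < t + 1 by rewrite ltrDl.
have [phi_der phi_derE] := continuous_FTC1_closed t1 phi_int a_lt_t (phic t (ltW a_lt_t)).
by apply: DeriveDef; last rewrite -derive1E.
Qed.

Lemma derive_ge0_ndecr phi dphi a :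
  (forall t, a <= t -> is_derive t 1 phi (dphi t)) -> (forall t, a <= t -> 0 <= dphi t) ->
  forall s t, a <= s -> s <= t -> phi s <= phi t.
Proof.
move=> phid dphi_ge0; apply: ger0_derive1_ndecry.
- by move=> t; rewrite in_itv /= andbT => /ltW /phid phid_t; exact: ex_derive.
- move=> t; rewrite in_itv /= andbT => /ltW a_le_t.
  by rewrite derive1E (derive_val (is_derive := phid t a_le_t)); exact: dphi_ge0.
- apply: derivable_within_continuous => t; rewrite in_itv /= andbT.
  by move=> /phid phid_t; exact: ex_derive.
Qed.

Lemma derive_le0_nincr phi dphi a :
  (forall t, a <= t -> is_derive t 1 phi (dphi t)) -> (forall t, a <= t -> dphi t <= 0) ->
  forall s t, a <= s -> s <= t -> phi t <= phi s.
Proof.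
move=> phid dphi_le0 s t a_le_s st; rewrite -lerN2.
apply: (derive_ge0_ndecr (phi := fun t => - phi t) (dphi := fun t => - dphi t)) a_le_s st.
  by move=> u au; exact: (is_deriveN (phid u au)).
by move=> u au; rewrite oppr_ge0; exact: dphi_le0.
Qed.

Lemma gronwall_nincr phi dphi c dc a :
  (forall t, a <= t -> is_derive t 1 phi (dphi t)) ->
  (forall t, a <= t -> is_derive t 1 c (dc t)) ->
  (forall t, a <= t -> dphi t <= - (dc t * phi t)) ->
  forall t, a <= t -> phi t * expR (c t) <= phi a * expR (c a).
Proof.
move=> phid cd phi_ineq t a_le_t.
apply: (derive_le0_nincr (phi := fun s => phi s * expR (c s))
  (dphi := fun s => phi s * (expR (c s) * dc s) + expR (c s) * dphi s)) (lexx a) a_le_t.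
  move=> s a_le_s; have expRc := is_derive1_comp (is_derive_expR (c s)) (cd s a_le_s).
  exact: (is_deriveM (phid s a_le_s) expRc).
move=> s a_le_s; have := phi_ineq s a_le_s; have := expR_gt0 (c s); nra.
Qed.

End RealCalculus.

Section ConvexGradient.
Variables (R : realType) (V : normedModType R) (ip : V -> V -> R).
Hypothesis ip_inner : is_inner_product ip.
Variables (f : V -> R) (g : V -> V).
Hypotheses (f_convex : convex_fun f) (f_grad : is_gradient ip f g).

Lemma convex_grad_le x y : f x + ip (g x) (y - x) <= f y.
Proof.
set v := y - x.
have [fdiff dfE] := f_grad x.
have fv : derivable f x v by exact: diff_derivable.
have Dv : 'D_v f x = ip (g x) v by rewrite deriveE // dfE.
rewrite -lerBrDl -Dv.
apply: (closed_cvg _ (@closed_le _ (f y - f x)) _ _ (cvg_dnbhs_at_right fv)).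
near=> h.
have h0 : 0 < h by near: h; exact: nbhs_right_gt.
have h1 : h < 1 by near: h; exact: nbhs_right_lt.
rewrite /= -[h^-1 *: _]/(h^-1 * _) mulrC -/(_ / h) ler_pdivrMr //.
have -> : h *: v + x = h *: y + (1 - h) *: x.
  by rewrite /v scalerBr scalerBl scale1r -addrA; congr (_ + _); rewrite addrC.
have : f (h *: y + (1 - h) *: x) <= h * f y + (1 - h) * f x.
  by apply: f_convex; rewrite (ltW h0) (ltW h1).
lra.
Unshelve. all: by end_near.
Qed.

Lemma grad_monotone x y : 0 <= ip (g x - g y) (x - y).
Proof.
have := convex_grad_le x y; have := convex_grad_le y x.
rewrite (ipBl ip_inner) -[y - x]opprB (ipNr ip_inner); lra.
Qed.

End ConvexGradient.

Section AHTField.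
Variables (R : realType) (X Y : normedModType R).
Variables (ipX : X -> X -> R) (ipY : Y -> Y -> R).
Hypotheses (ipX_inner : is_inner_product ipX) (ipY_inner : is_inner_product ipY).
Variables (f : X -> R) (gradf : X -> X) (A : {linear X -> Y}) (Astar : Y -> X) (b : Y).
Hypotheses (f_convex : convex_fun f) (f_grad : is_gradient ipX f gradf).
Hypothesis A_adjoint : forall (u : X) (v : Y), ipY (A u) v = ipX u (Astar v).

Definition aht_x (x : X) (l : Y) (e : R) : X := - (gradf x + Astar l + e *: x).
Definition aht_lam (x : X) (l : Y) (e : R) : Y := A x - b - e *: l.

Lemma aht_monotone x0 x1 l0 l1 e0 e1 :
  ipX (aht_x x1 l1 e1 - aht_x x0 l0 e0) (x1 - x0)
    + ipY (aht_lam x1 l1 e1 - aht_lam x0 l0 e0) (l1 - l0)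
  <= - ((e1 + e0) / 2) * (ipX (x1 - x0) (x1 - x0) + ipY (l1 - l0) (l1 - l0))
     - ((e1 - e0) / 2) * ((ipX x1 x1 + ipY l1 l1) - (ipX x0 x0 + ipY l0 l0)).
Proof.
have := grad_monotone ipX_inner f_convex f_grad x1 x0.
have A_skew : ipX (Astar l1 - Astar l0) (x1 - x0) = ipY (A x1 - A x0) (l1 - l0).
  rewrite (ipBl ipX_inner) !(ipC ipX_inner (Astar _)) -!A_adjoint.
  by rewrite -(ipBr ipY_inner) linearB.
move: A_skew; rewrite /aht_x /aht_lam.
rewrite !(ipBl ipX_inner, ipDl ipX_inner, ipNl ipX_inner, ipZl ipX_inner).
rewrite !(ipBl ipY_inner, ipDl ipY_inner, ipNl ipY_inner, ipZl ipY_inner).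
rewrite !(ipBr ipX_inner, ipBr ipY_inner) ?(ipC ipX_inner x0 x1) ?(ipC ipY_inner l0 l1).
lra.
Qed.

Lemma saddle_feasible xs ls : saddle_point ipY f A b xs ls -> A xs = b.
Proof.
move=> /(_ xs (ls + (A xs - b))) [+ _]; rewrite /lagrangian (ipDl ipY_inner).
rewrite (ipxx ipY_inner) => le_sqr.
apply/eqP; rewrite -subr_eq0 -normr_eq0 -sqrf_eq0 eq_le sqr_ge0 andbT; lra.
Qed.

Lemma aht_saddle_le x l xs ls e : saddle_point ipY f A b xs ls -> 0 <= e ->
  ipX (aht_x x l e) (x - xs) + ipY (aht_lam x l e) (l - ls) <=
  - e * ((ipX (x - xs) (x - xs) + ipY (l - ls) (l - ls)) / 2
         - (ipX xs xs + ipY ls ls) / 2).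
Proof.
move=> saddle e_ge0.
have Axs := saddle_feasible saddle.
have := convex_grad_le f_convex f_grad x xs.
have [_] := saddle x ls; rewrite /lagrangian Axs subrr (ip0r ipY_inner) addr0.
have A_adj : ipX (Astar l) (x - xs) = ipY (A x) l - ipY b l.
  by rewrite (ipC ipX_inner) -A_adjoint linearB Axs (ipBl ipY_inner).
have : 0 <= e * (ipX x x + ipY l l).
  by apply: mulr_ge0 => //; apply: addr_ge0; exact: ipxx_ge0.
move: A_adj; rewrite /aht_x /aht_lam.
rewrite !(ipBl ipX_inner, ipDl ipX_inner, ipNl ipX_inner, ipZl ipX_inner).
rewrite !(ipBl ipY_inner, ipDl ipY_inner, ipNl ipY_inner, ipZl ipY_inner).
rewrite !(ipBr ipX_inner, ipBr ipY_inner) (ipC ipX_inner xs x) (ipC ipY_inner ls l).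
rewrite (ipC ipY_inner ls (A x)) (ipC ipY_inner ls b).
lra.
Qed.

End AHTField.

Section AHTTrajectory.
Variables (R : realType) (X Y : normedModType R).
Variables (ipX : X -> X -> R) (ipY : Y -> Y -> R).
Hypotheses (ipX_inner : is_inner_product ipX) (ipY_inner : is_inner_product ipY).
Variables (f : X -> R) (gradf : X -> X) (A : {linear X -> Y}) (Astar : Y -> X) (b : Y).
Hypotheses (f_convex : convex_fun f) (f_grad : is_gradient ipX f gradf).
Hypothesis A_adjoint : forall (u : X) (v : Y), ipY (A u) v = ipX u (Astar v).
Variables (eps : R -> R) (t0 : R) (x : R -> X) (lam : R -> Y).
Hypotheses (eps_gt0 : forall t, t0 <= t -> 0 < eps t)
  (eps_der : forall t, t0 <= t -> derivable eps t 1)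
  (x_der : forall t, t0 <= t -> derivable x t 1)
  (lam_der : forall t, t0 <= t -> derivable lam t 1).
Hypotheses
  (x_aht : forall t, t0 <= t ->
     derive1 x t + gradf (x t) + Astar (lam t) + eps t *: x t = 0)
  (lam_aht : forall t, t0 <= t ->
     derive1 lam t + b - A (x t) + eps t *: lam t = 0).

Lemma derive1_x_aht t : t0 <= t ->
  derive1 x t = aht_x gradf Astar (x t) (lam t) (eps t).
Proof.
by move=> /x_aht /eqP; rewrite -!addrA addr_eq0 => /eqP ->; rewrite !addrA.
Qed.

Lemma derive1_lam_aht t : t0 <= t ->
  derive1 lam t = aht_lam A b (x t) (lam t) (eps t).
Proof.
move=> /lam_aht /eqP; rewrite -!addrA addr_eq0 => /eqP ->.
by rewrite /aht_lam !opprD opprK addrCA addrA.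
Qed.

Definition sqnorm t := ipX (x t) (x t) + ipY (lam t) (lam t).
Definition sqnorm_int t := \int[lebesgue_measure]_(u in `[t0, t]) sqnorm u.

Lemma sqnorm_ge0 t : 0 <= sqnorm t.
Proof. by apply: addr_ge0; exact: ipxx_ge0. Qed.

Lemma is_derive_sqnorm_int t : t0 < t -> is_derive t 1 sqnorm_int (sqnorm t).
Proof.
move=> t0t; apply: is_derive_integral => // s t0s.
have xd := derivable_is_derive1 (x_der t0s); have ld := derivable_is_derive1 (lam_der t0s).
exact: (is_derive_continuous
  (is_deriveD (is_derive_ip ipX_inner xd xd) (is_derive_ip ipY_inner ld ld))).
Qed.

Lemma is_derive_rho t : t0 < t -> is_derive t 1 (rho eps t0) (eps t).
Proof.
move=> t0t; apply: is_derive_integral => // s /eps_der /derivable_is_derive1.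
exact: is_derive_continuous.
Qed.

Lemma rho_le s t : t0 < s -> s <= t -> rho eps t0 s <= rho eps t0 t.
Proof.
move=> t0s.
apply: (derive_ge0_ndecr (phi := rho eps t0) (dphi := eps) (a := s)) (lexx s).
  by move=> u su; apply: is_derive_rho; exact: lt_le_trans su.
by move=> u su; apply/ltW/eps_gt0; exact/ltW/(lt_le_trans t0s).
Qed.

Variables (xs : X) (ls : Y).
Hypothesis saddle : saddle_point ipY f A b xs ls.

Definition saddle_gap t :=
  ipX (x t - xs) (x t - xs) + ipY (lam t - ls) (lam t - ls) - (ipX xs xs + ipY ls ls).

Lemma is_derive_saddle_gap t : t0 <= t ->
  is_derive t 1 saddle_gap
    (2 * (ipX (derive1 x t) (x t - xs) + ipY (derive1 lam t) (lam t - ls))).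
Proof.
move=> t0t.
have xd := is_deriveB (derivable_is_derive1 (x_der t0t)) (is_derive_cst xs t 1).
have ld := is_deriveB (derivable_is_derive1 (lam_der t0t)) (is_derive_cst ls t 1).
rewrite subr0 in xd; rewrite subr0 in ld.
apply: (is_derive_eq (is_deriveB (is_deriveD (is_derive_ip ipX_inner xd xd)
  (is_derive_ip ipY_inner ld ld)) (is_derive_cst (ipX xs xs + ipY ls ls) t 1))).
by rewrite /= subr0 (ipC ipX_inner (x t - xs)) (ipC ipY_inner (lam t - ls)); ring.
Qed.

Lemma saddle_gap_decay T t : t0 < T -> T <= t ->
  saddle_gap t * expR (rho eps t0 t) <= saddle_gap T * expR (rho eps t0 T).
Proof.
move=> t0T; apply: (gronwall_nincr (phi := saddle_gap) (c := rho eps t0) (dc := eps)).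
all: move=> s Ts; have t0s := lt_le_trans t0T Ts.
- exact: is_derive_saddle_gap (ltW t0s).
- exact: is_derive_rho.
- have := aht_saddle_le ipX_inner ipY_inner f_convex f_grad A_adjoint (x s) (lam s)
    saddle (ltW (eps_gt0 (ltW t0s))).
  rewrite -(derive1_x_aht (ltW t0s)) -(derive1_lam_aht (ltW t0s)) /saddle_gap; lra.
Qed.

Lemma sqnorm_bounded T : t0 < T -> exists B, forall t, T <= t -> sqnorm t <= B.
Proof.
move=> t0T; set c := ipX xs xs + ipY ls ls.
exists (2 * (`|saddle_gap T| + c) + 2 * c) => t Tt.
have gap_le : saddle_gap t <= `|saddle_gap T|.
  have w_le : expR (rho eps t0 T) <= expR (rho eps t0 t).
    by rewrite ler_expR; exact: rho_le.
  rewrite -(ler_pM2r (expR_gt0 (rho eps t0 t))).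
  apply: le_trans (saddle_gap_decay t0T Tt) _.
  apply: le_trans (ler_wpM2r (ltW (expR_gt0 _)) (ler_norm (saddle_gap T))) _.
  by apply: ler_wpM2l.
have := ipxx_le_sub ipX_inner (x t) xs; have := ipxx_le_sub ipY_inner (lam t) ls.
by move: gap_le; rewrite /sqnorm /saddle_gap /c; lra.
Qed.

Variable tplus : R.
Hypotheses (t0_le_tplus : t0 <= tplus)
  (eps_der2 : forall t, t0 <= t -> derivable (derive1 eps) t 1)
  (eps_sqrD_ge0 : forall t, tplus <= t -> eps t ^+ 2 + derive1 eps t >= 0)
  (eps_rate_le0 : forall t, tplus <= t ->
     2 * eps t * derive1 eps t + derive1n 2 eps t <= 0).

Lemma eps_sqrD_nincr s t : tplus <= s -> s <= t ->
  eps t ^+ 2 + derive1 eps t <= eps s ^+ 2 + derive1 eps s.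
Proof.
apply: (derive_le0_nincr (phi := fun u => eps u ^+ 2 + derive1 eps u)
  (dphi := fun u => 2 * eps u * derive1 eps u + derive1n 2 eps u)) => u tpu.
  have t0u := le_trans t0_le_tplus tpu.
  have ed := derivable_is_derive1 (eps_der t0u).
  have ed2 := derivable_is_derive1 (eps_der2 t0u).
  apply: (is_derive_eq (is_deriveD (is_deriveM ed ed) ed2)).
  by rewrite -![_ *: _]/(_ * _); rewrite /derive1n /=; ring.
exact: eps_rate_le0.
Qed.

Definition energy h t :=
  ipX (diffq x h t) (diffq x h t) + ipY (diffq lam h t) (diffq lam h t)
  + diffq eps h t * diffq sqnorm_int h t.

Definition energy0 t :=
  ipX (derive1 x t) (derive1 x t) + ipY (derive1 lam t) (derive1 lam t)
  + derive1 eps t * sqnorm t.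

Lemma is_derive_energy h t : 0 < h -> t0 < t ->
  is_derive t 1 (energy h)
    (2 * (ipX (diffq (derive1 x) h t) (diffq x h t)
          + ipY (diffq (derive1 lam) h t) (diffq lam h t))
     + diffq eps h t * diffq sqnorm h t
     + diffq (derive1 eps) h t * diffq sqnorm_int h t).
Proof.
move=> h0 t0t; have t0th : t0 < t + h by rewrite (lt_le_trans t0t) // lerDl ltW.
have xd := is_derive_diffq (derivable_is_derive1 (x_der (ltW t0th)))
  (derivable_is_derive1 (x_der (ltW t0t))).
have ld := is_derive_diffq (derivable_is_derive1 (lam_der (ltW t0th)))
  (derivable_is_derive1 (lam_der (ltW t0t))).
have ed := is_derive_diffq (derivable_is_derive1 (eps_der (ltW t0th)))
  (derivable_is_derive1 (eps_der (ltW t0t))).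
have Pd := is_derive_diffq (is_derive_sqnorm_int t0th) (is_derive_sqnorm_int t0t).
apply: (is_derive_eq (is_deriveD (is_deriveD (is_derive_ip ipX_inner xd xd)
  (is_derive_ip ipY_inner ld ld)) (is_deriveM ed Pd))).
rewrite (ipC ipX_inner (diffq x h t)) (ipC ipY_inner (diffq lam h t)).
by rewrite -![_ *: _]/(_ * _); ring.
Qed.

Lemma sqnorm_int_le s t : t0 < s -> s <= t -> sqnorm_int s <= sqnorm_int t.
Proof.
move=> t0s.
apply: (derive_ge0_ndecr (phi := sqnorm_int) (dphi := sqnorm) (a := s)) (lexx s) => u su.
  by apply: is_derive_sqnorm_int; exact: lt_le_trans su.
exact: sqnorm_ge0.
Qed.

Lemma energy_rate_le h t : 0 < h -> tplus < t ->
  2 * (ipX (diffq (derive1 x) h t) (diffq x h t)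
       + ipY (diffq (derive1 lam) h t) (diffq lam h t))
  + diffq eps h t * diffq sqnorm h t
  + diffq (derive1 eps) h t * diffq sqnorm_int h t
  <= - ((eps t + eps (t + h)) * energy h t).
Proof.
move=> h0 tpt; have t0t := le_lt_trans t0_le_tplus tpt.
have t_th : t <= t + h by rewrite lerDl ltW.
have t0th := ltW (lt_le_trans t0t t_th).
have key := aht_monotone ipX_inner ipY_inner b f_convex f_grad A_adjoint
  (x t) (x (t + h)) (lam t) (lam (t + h)) (eps t) (eps (t + h)).
rewrite -(derive1_x_aht (ltW t0t)) -(derive1_x_aht t0th) in key.
rewrite -(derive1_lam_aht (ltW t0t)) -(derive1_lam_aht t0th) in key.
have eps_le := eps_sqrD_nincr (ltW tpt) t_th.
set dP := sqnorm_int (t + h) - sqnorm_int t.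
have P_ge0 : 0 <= dP by rewrite subr_ge0; exact: sqnorm_int_le.
have eps_P_le : (derive1 eps (t + h) - derive1 eps t) * dP
    <= - (eps t + eps (t + h)) * (eps (t + h) - eps t) * dP.
  by apply: ler_wpM2r => //; lra.
have hh : 0 <= h^-1 * h^-1 by rewrite mulr_ge0 // invr_ge0 ltW.
have := ler_wpM2l hh key; have := ler_wpM2l hh eps_P_le.
rewrite /energy /diffq /sqnorm /dP.
rewrite !(ipZl ipX_inner, ipZr ipX_inner, ipZl ipY_inner, ipZr ipY_inner).
rewrite -![_ *: _]/(_ * _).
lra.
Qed.

Lemma energy_decay h T t : 0 < h -> tplus < T -> T <= t ->
  energy h t * expR (rho eps t0 t + rho eps t0 (t + h))
  <= energy h T * expR (rho eps t0 T + rho eps t0 (T + h)).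
Proof.
move=> h0 tpT; apply: (gronwall_nincr (phi := energy h)
  (c := fun s => rho eps t0 s + rho eps t0 (s + h)) (dc := fun s => eps s + eps (s + h))).
all: move=> s Ts.
- have t0s := le_lt_trans t0_le_tplus (lt_le_trans tpT Ts).
  exact: is_derive_energy.
- have t0s := le_lt_trans t0_le_tplus (lt_le_trans tpT Ts).
  have t0sh : t0 < s + h by rewrite (lt_le_trans t0s) // lerDl ltW.
  exact: (is_deriveD (is_derive_rho t0s) (is_derive_translate (is_derive_rho t0sh))).
- exact: energy_rate_le h0 (lt_le_trans tpT Ts).
Qed.

Lemma cvg_energy t : t0 < t -> energy h t @[h --> 0^'] --> energy0 t.
Proof.
move=> t0t; have xd := derivable_is_derive1 (x_der (ltW t0t)).
have ld := derivable_is_derive1 (lam_der (ltW t0t)).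
have ed := derivable_is_derive1 (eps_der (ltW t0t)).
apply: cvgD; first apply: cvgD.
- by apply: (cvg_ip ipX_inner); exact: (is_derive_diffqP _ _ _).1 xd.
- by apply: (cvg_ip ipY_inner); exact: (is_derive_diffqP _ _ _).1 ld.
- apply: cvgM; first exact: (is_derive_diffqP _ _ _).1 ed.
  exact: (is_derive_diffqP _ _ _).1 (is_derive_sqnorm_int t0t).
Qed.

Lemma energy0_decay T t : tplus < T -> T <= t ->
  energy0 t * expR (rho eps t0 t + rho eps t0 t)
  <= energy0 T * expR (rho eps t0 T + rho eps t0 T).
Proof.
move=> tpT Tt.
have cvg_weighted s : tplus < s ->
    energy h s * expR (rho eps t0 s + rho eps t0 (s + h)) @[h --> 0^'+]
    --> energy0 s * expR (rho eps t0 s + rho eps t0 s).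
  move=> tps; have t0s := le_lt_trans t0_le_tplus tps.
  apply: cvg_dnbhs_at_right; apply: cvgM; first exact: cvg_energy.
  have rho_cvg : rho eps t0 s + rho eps t0 (s + h) @[h --> 0^']
      --> rho eps t0 s + rho eps t0 s.
    apply: cvgD; first exact: cvg_cst.
    exact: is_derive_cvg_translate (is_derive_rho t0s).
  exact: (cvg_comp _ _ rho_cvg (@continuous_expR R _)).
apply: ler_cvg_to (cvg_weighted t (lt_le_trans tpT Tt)) (cvg_weighted T tpT) _.
near=> h; have h0 : 0 < h by near: h; exact: nbhs_right_gt.
exact: energy_decay h0 tpT Tt.
Unshelve. all: by end_near.
Qed.

Lemma aht_velocity_bigO :
  (fun t => `|derive1 x t| ^+ 2 + `|derive1 lam t| ^+ 2)
    =O_ (pinfty_filter R) (fun t => expR (- 2 * rho eps t0 t) + eps t ^+ 2).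
Proof.
set T := tplus + 1; have tpT : tplus < T by rewrite ltrDl.
have [B sqnorm_le] := sqnorm_bounded (le_lt_trans t0_le_tplus tpT).
set C := energy0 T * expR (rho eps t0 T + rho eps t0 T).
apply/eqO_exP; exists (`|C| + `|B| + 1).
  by rewrite ltr_pwDr // addr_ge0.
exists T; split; first exact: num_real.
move=> t /ltW Tt; have tpt := ltW (lt_le_trans tpT Tt).
set w := expR (- 2 * rho eps t0 t).
have w_gt0 : 0 < w by exact: expR_gt0.
have energy0_le : energy0 t <= C * w.
  have -> : w = (expR (rho eps t0 t + rho eps t0 t))^-1.
    by rewrite /w -expRN; congr expR; ring.
  by rewrite ler_pdivlMr; [exact: energy0_decay | exact: expR_gt0].
have N_le : sqnorm t <= `|B| by rewrite (le_trans (sqnorm_le t Tt)) ?ler_norm.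
have lhs_ge0 : 0 <= `|derive1 x t| ^+ 2 + `|derive1 lam t| ^+ 2.
  by rewrite addr_ge0 ?sqr_ge0.
have rhs_ge0 : 0 <= w + eps t ^+ 2 by rewrite addr_ge0 ?sqr_ge0 ?ltW.
rewrite (ger0_norm lhs_ge0) (ger0_norm rhs_ge0).
have := eps_sqrD_ge0 tpt; have := sqnorm_ge0 t; have := ler_norm C.
have := normr_ge0 C; have := sqr_ge0 (eps t).
move: energy0_le N_le; rewrite /energy0 (ipxx ipX_inner) (ipxx ipY_inner).
nra.
Qed.

End AHTTrajectory.

Unset Implicit Arguments.

Theorem proposition4p2 (R : realType)
  (X Y : completeNormedModType R) (ipX : X -> X -> R) (ipY : Y -> Y -> R)
  (f : X -> R) (gradf : X -> X) (A : {linear X -> Y}) (Astar : Y -> X) (b : Y)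
  (eps : R -> R) (t0 : R)
  (x : R -> X) (lam : R -> Y) (tplus : R) :
  is_inner_product ipX -> is_inner_product ipY ->
  (* standing assumptions on f *)
  convex_fun f -> is_gradient ipX f gradf -> continuous gradf ->
  lipschitz_on_bounded gradf ->
  (* A linear continuous, Astar its adjoint *)
  continuous A -> (forall (u : X) (v : Y), ipY (A u) v = ipX u (Astar v)) ->
  (* standing assumptions on eps *)
  0 <= t0 ->
  (forall t, t0 <= t -> 0 < eps t) ->
  (forall t, t0 <= t -> derivable eps t 1) ->
  (forall t, t0 <= t -> derivable (derive1 eps) t 1) ->
  (forall t, t0 <= t -> {for t, continuous (derive1n 2 eps)}) ->
  eps t @[t --> +oo] --> 0 ->
  (* S x M nonempty *)
  (exists (xs : X) (ls : Y), saddle_point ipY f A b xs ls) ->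
  (* (x, lam) is a C^1 solution of (AHT) on [t0, +oo[ *)
  (forall t, t0 <= t -> derivable x t 1) ->
  (forall t, t0 <= t -> derivable lam t 1) ->
  (forall t, t0 <= t -> {for t, continuous (derive1 x)}) ->
  (forall t, t0 <= t -> {for t, continuous (derive1 lam)}) ->
  (forall t, t0 <= t ->
     (derive1 x) t + gradf (x t) + Astar (lam t) + eps t *: x t = 0) ->
  (forall t, t0 <= t ->
     (derive1 lam) t + b - A (x t) + eps t *: lam t = 0) ->
  (* conditions on eps after tplus *)
  t0 <= tplus ->
  (forall t, tplus <= t -> eps t ^+ 2 + (derive1 eps) t >= 0) ->
  (forall t, tplus <= t -> 2 * eps t * (derive1 eps) t + (derive1n 2 eps) t <= 0) ->
  (fun t => `|(derive1 x) t| ^+ 2 + `|(derive1 lam) t| ^+ 2)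
    =O_ (pinfty_filter R)
  (fun t => expR (- 2 * rho eps t0 t) + eps t ^+ 2).
Proof.
move=> ipX_inner ipY_inner f_convex f_grad _ _ _ A_adjoint _ eps_gt0 eps_der eps_der2
  _ _ [xs [ls saddle]] x_der lam_der _ _ x_aht lam_aht t0_le_tplus eps_sqrD_ge0
  eps_rate_le0.
exact: (aht_velocity_bigO ipX_inner ipY_inner f_convex f_grad A_adjoint eps_gt0
  eps_der x_der lam_der x_aht lam_aht saddle t0_le_tplus eps_der2 eps_sqrD_ge0
  eps_rate_le0).
Qed.
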